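(* For any orderings of $V$ used in the two passes, the output $S$ of the Two-Pass algorithm satisfies $|S|\le k$ and $f(S)\ge\frac59\mathrm{OPT}$.
   Context: $V$ is a finite ground set with $|V|=n$; $f:2^V\to\mathbb{R}_{\ge0}$ is monotone, submodular and normalized; $f(e\mid Y)=f(Y\cup\{e\})-f(Y)$. $k\le n$ is a positive integer and $\mathrm{OPT}=\max\{f(S):S\subseteq V,|S|\le k\}$. Two-Pass algorithm (knows $\mathrm{OPT}$): start with $S=\emptyset$. In the first pass over the elements of $V$ (in some order), add each element $e$ to $S$ if $|S|<k$ and $f(e\mid S)\ge\frac{2}{3}\cdot\frac{\mathrm{OPT}}{k}$. In the second pass over the elements of $V$ (in some order), add each element $e$ to $S$ if $|S|<k$ and $f(e\mid S)\ge\frac{4}{9}\cdot\frac{\mathrm{OPT}}{k}$. Return $S$. *)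

From HB Require Import structures.
From mathcomp Require Import all_boot all_order all_algebra.
Set Implicit Arguments. Unset Strict Implicit. Unset Printing Implicit Defensive.
Import Order.TTheory GRing.Theory Num.Theory.
Local Open Scope ring_scope.

Section TwoPass.
Variables (T : finType) (R : realFieldType).

Definition marg (f : {set T} -> R) (e : T) (Y : {set T}) : R := f (e |: Y) - f Y.

Definition monotone_set_fun (f : {set T} -> R) : Prop :=
  forall A B : {set T}, A \subset B -> f A <= f B.

Definition submodular (f : {set T} -> R) : Prop :=
  forall (A B : {set T}) (e : T), A \subset B -> e \notin B ->
    marg f e B <= marg f e A.

Definition normalized (f : {set T} -> R) : Prop := f set0 = 0.

Definition nonneg_set_fun (f : {set T} -> R) : Prop := forall A, 0 <= f A.

(* OPT = max { f S : |S| <= k }  (0 is a neutral start since f >= 0 and set0 is feasible) *)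
Definition OPT (f : {set T} -> R) (k : nat) : R :=
  \big[Num.max/0]_(S : {set T} | (#|S| <= k)%N) f S.

Definition pass (f : {set T} -> R) (k : nat) (tau : R) (s : seq T) (S0 : {set T})
  : {set T} :=
  foldl (fun (S : {set T}) (e : T) => if (#|S| < k)%N && (tau <= marg f e S) then e |: S else S) S0 s.

Definition two_pass (f : {set T} -> R) (k : nat) (s1 s2 : seq T) : {set T} :=
  let opt := OPT f k in
  pass f k ((4%:R / 9%:R) * (opt / k%:R)) s2
    (pass f k ((2%:R / 3%:R) * (opt / k%:R)) s1 set0).

End TwoPass.

From HB Require Import structures.
From mathcomp Require Import all_boot all_order all_algebra.
From mathcomp Require Import lra.
Import Order.TTheory GRing.Theory Num.Theory.
Set Implicit Arguments. Unset Strict Implicit. Unset Printing Implicit Defensive.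
Local Open Scope ring_scope.

(* A pass only adds elements whose marginal gain is at least its threshold tau,
   so f S - tau * |S| never decreases along a pass; and a pass that ends with
   |S| < k has rejected every element outside S, so by submodularity and
   monotonicity OPT <= f S + k * tau.  With u = OPT / k: if the first pass fills
   S1 then f S1 >= (2/3) OPT; otherwise f S1 >= OPT / 3 and f S1 >= (2/3) u |S1|.
   If the second pass does not fill S the bound OPT <= f S + (4/9) OPT concludes;
   if it does, f S >= f S1 + (4/9) u (k - |S1|), which is at least (5/9) OPT
   whether u |S1| lies above or below OPT / 2. *)

Section TwoPassAnalysis.
Variables (T : finType) (R : realFieldType) (f : {set T} -> R) (k : nat).

Lemma marg_mem (e : T) (A : {set T}) : e \in A -> marg f e A = 0.
Proof. by move=> eA; rewrite /marg (setUidPr _) ?sub1set ?subrr. Qed.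

Lemma pass_subset (tau : R) (s : seq T) (S0 : {set T}) : S0 \subset pass f k tau s S0.
Proof.
elim: s S0 => [|e s IH] S0 /=; first exact: subxx.
by apply: subset_trans (IH _); case: ifP => _; rewrite ?subsetU1.
Qed.

Lemma pass_card_le (tau : R) (s : seq T) (S0 : {set T}) :
  (#|S0| <= k)%N -> (#|pass f k tau s S0| <= k)%N.
Proof.
elim: s S0 => [|e s IH] S0 //= S0le; apply: IH.
case: ifP => // /andP[S0k _].
by rewrite cardsU1 (leq_trans _ S0k) // -add1n leq_add2r leq_b1.
Qed.

Lemma pass_gain (tau : R) (s : seq T) (S0 : {set T}) :
  f S0 - tau * #|S0|%:R <= f (pass f k tau s S0) - tau * #|pass f k tau s S0|%:R.
Proof.
elim: s S0 => [|e s IH] S0 /=; first exact: lexx.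
apply: le_trans (IH _); case: ifP => // /andP[_]; rewrite /marg cardsU1.
case: (boolP (e \in S0)) => [eS0 _ | _ tau_le]; first by rewrite (setUidPr _) ?sub1set.
by rewrite natrD mulrDr mulr1; lra.
Qed.

Lemma pass_gain_set0 (tau : R) (s : seq T) : normalized f ->
  tau * #|pass f k tau s set0|%:R <= f (pass f k tau s set0).
Proof.
move=> f_norm; rewrite -subr_ge0.
by have := pass_gain tau s set0; rewrite cards0 f_norm mulr0 subr0.
Qed.

Lemma OPT_ge0 : nonneg_set_fun f -> 0 <= OPT f k.
Proof.
by move=> f_ge0; rewrite /OPT; elim/big_ind: _ => // x y x_ge0 _; rewrite le_max x_ge0.
Qed.

Hypotheses (f_mono : monotone_set_fun f) (f_submod : submodular f).

Lemma pass_marg_lt (tau : R) (s : seq T) (S0 : {set T}) (e : T) :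
  (#|pass f k tau s S0| < k)%N -> e \in s -> e \notin pass f k tau s S0 ->
  marg f e (pass f k tau s S0) < tau.
Proof.
elim: s S0 => [|x s IH] S0 //= Sk.
rewrite inE => /predU1P[-> | es]; last exact: IH.
have S0_sub := pass_subset tau s.
case: ifP Sk => [_ _ | /negbT x_rejected Sk] xS.
  by rewrite (subsetP (S0_sub _) _ (setU11 x S0)) in xS.
have S0k : (#|S0| < k)%N := leq_ltn_trans (subset_leq_card (S0_sub S0)) Sk.
apply: le_lt_trans (f_submod (S0_sub S0) xS) _.
by rewrite S0k /= -ltNge in x_rejected.
Qed.

Lemma submod_setU_le (A B : {set T}) (tau : R) : 0 <= tau ->
  (forall e, e \in B -> e \notin A -> marg f e A <= tau) ->
  f (A :|: B) <= f A + #|B|%:R * tau.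
Proof.
move=> tau_ge0; have [n] := ubnP #|B|; elim: n B => // n IH B /ltnSE Bn margB.
have [-> | [x xB]] := set_0Vmem B; first by rewrite setU0 cards0 mul0r addr0.
set B' := B :\ x.
have ->: A :|: B = x |: (A :|: B') by rewrite setUCA setD1K.
rewrite (cardsD1 x B) xB natrD mulrDl mul1r addrCA.
have IHB' : f (A :|: B') <= f A + #|B'|%:R * tau.
  apply: IH => [|e /setD1P[_ eB]]; last exact: margB.
  by rewrite (cardsD1 x B) xB in Bn.
have -> : f (x |: (A :|: B')) = marg f x (A :|: B') + f (A :|: B').
  by rewrite /marg subrK.
apply: lerD IHB'; case: (boolP (x \in A :|: B')) => xAB'; first by rewrite marg_mem.
have xA : x \notin A by apply: contra xAB' => xA; rewrite inE xA.
exact: le_trans (f_submod (subsetUl A B') xAB') (margB x xB xA).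
Qed.

Hypothesis f_norm : normalized f.

Lemma OPT_witness : exists2 O : {set T}, (#|O| <= k)%N & OPT f k <= f O.
Proof.
rewrite /OPT; elim/big_ind: _ => [| x y [O1 O1k xO1] [O2 O2k yO2] | O Ok].
- by exists set0; rewrite ?cards0 ?f_norm.
- by have [_|_] := leP x y; [exists O2 | exists O1].
- by exists O.
Qed.

Lemma OPT_le_threshold (X : {set T}) (tau : R) : 0 <= tau ->
  (forall e, e \notin X -> marg f e X <= tau) -> OPT f k <= f X + k%:R * tau.
Proof.
move=> tau_ge0 margX; have [O Ok OPT_O] := OPT_witness.
apply: le_trans OPT_O (le_trans (f_mono (subsetUr X O)) _).
apply: le_trans (@submod_setU_le X O tau tau_ge0 (fun e _ => margX e)) _.
by rewrite lerD2l ler_wpM2r // ler_nat.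
Qed.

Lemma pass_unsaturated (tau : R) (s : seq T) (S0 : {set T}) :
  0 <= tau -> (forall e, e \in s) -> (#|pass f k tau s S0| < k)%N ->
  OPT f k <= f (pass f k tau s S0) + k%:R * tau.
Proof.
move=> tau_ge0 s_full Sk; apply: OPT_le_threshold => // e eS.
exact/ltW/pass_marg_lt.
Qed.

End TwoPassAnalysis.

Lemma two_pass_saturated_arith (R : realFieldType) (o u j a b : R) :
  2%:R / 3%:R * u * j <= a -> o <= a + 2%:R / 3%:R * o ->
  a - 4%:R / 9%:R * u * j <= b - 4%:R / 9%:R * o -> 5%:R / 9%:R * o <= b.
Proof.
rewrite -!(mulrA _ u); set J := u * j => *.
by have [|] := leP o (2%:R * J); lra.
Qed.

Theorem mainTheorem16 (T : finType) (R : realFieldType) (f : {set T} -> R)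
  (k : nat) (s1 s2 : seq T) :
  nonneg_set_fun f -> monotone_set_fun f -> submodular f -> normalized f ->
  (0 < k)%N -> (k <= #|T|)%N ->
  perm_eq s1 (enum T) -> perm_eq s2 (enum T) ->
  (#|two_pass f k s1 s2| <= k)%N /\
  (5%:R / 9%:R) * OPT f k <= f (two_pass f k s1 s2).
Proof.
move=> f_ge0 f_mono f_submod f_norm k_gt0 _ s1_perm s2_perm.
have s_full s : perm_eq s (enum T) -> forall e, e \in s.
  by move=> /perm_mem s_enum e; rewrite s_enum mem_enum.
rewrite /two_pass; set o := OPT f k; set u := o / k%:R.
set S1 := pass f k (2%:R / 3%:R * u) s1 set0.
set S := pass f k (4%:R / 9%:R * u) s2 S1.
have S1k : (#|S1| <= k)%N by apply: pass_card_le; rewrite cards0.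
split; first exact: pass_card_le.
have o_ge0 : 0 <= o := OPT_ge0 k f_ge0.
have ku : k%:R * u = o by rewrite mulrC divfK // pnatr_eq0 -lt0n.
have tau_k (c : R) : c * u * k%:R = c * o by rewrite -mulrA (mulrC u) ku.
have k_tau (c : R) : k%:R * (c * u) = c * o by rewrite mulrCA ku.
have u_ge0 : 0 <= u by rewrite divr_ge0.
have tau_ge0 (c d : nat) : 0 <= c%:R / d%:R * u by rewrite mulr_ge0 // divr_ge0.
have gain1 := pass_gain_set0 k (2%:R / 3%:R * u) s1 f_norm.
have gain2 := pass_gain f k (4%:R / 9%:R * u) s2 S1.
have [S1_lt|S1_ge] := ltnP #|S1| k; last first.
  have S1_eq : #|S1| = k by apply/anti_leq; rewrite S1_ge S1k.
  have S1_S : f S1 <= f S := f_mono _ _ (pass_subset f k _ s2 S1).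
  by rewrite S1_eq tau_k in gain1; lra.
have := pass_unsaturated f_mono f_submod f_norm (tau_ge0 2%N 3%N)
  (s_full _ s1_perm) S1_lt.
rewrite -/S1 -/o k_tau => opt1.
have [S_lt|S_ge] := ltnP #|S| k.
  have := pass_unsaturated f_mono f_submod f_norm (tau_ge0 4%N 9%N)
    (s_full _ s2_perm) S_lt.
  by rewrite -/S -/o k_tau; lra.
have S_eq : #|S| = k by apply/anti_leq; rewrite S_ge pass_card_le.
rewrite S_eq tau_k in gain2.
exact: two_pass_saturated_arith gain1 opt1 gain2.
Qed.
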